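(* (Quantum Efron–Stein decomposition.) Let $\varrho=\rho_1\otimes\cdots\otimes\rho_n$ be a product state on $\mathcal K=\bigotimes_{i=1}^n\mathcal H_i$ (finite-dimensional Hilbert spaces). Then any observable $X$ on $\mathcal K$ has a unique decomposition $X=\sum_{J\subseteq[n]}X^{=J}$ into observables $X^{=J}$ such that: (1) $X^{=J}$ acts nontrivially only on the subsystems in $J$; (2) $\mathcal E_jX^{=J}=0$ for all $j\in J$. Moreover: (3) for every $J$, the map $X\mapsto X^{=J}$ is linear and $\sum_{I\subseteq J}X^{=I}=\mathcal E_{\overline J}X$; (4) for $I\ne J$, $\langle X^{=I},X^{=J}\rangle_\varrho=0$.
   Context: For $i\in[n]$, $\mathcal E_iY=\mathrm{Tr}_i[(\rho_i\otimes I)Y]$, regarded as an operator on $\mathcal K$ by tensoring with the identity on $\mathcal H_i$; for $I\subseteq[n]$, $\mathcal E_I=\prod_{i\in I}\mathcal E_i$ (these maps commute; $\mathcal E_\emptyset$ is the identity map), and $\overline J=[n]\setminus J$. ''Acts nontrivially only on the subsystems in $J$'' means the operator is of the form $Y\otimes I_{\overline J}$ with $Y$ acting on $\bigotimes_{j\in J}\mathcal H_j$. The inner product is $\langle Y,Z\rangle_\varrho=\mathrm{Tr}[\varrho Y^\dagger Z]$. *)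

(* Operators on K = (x)_i H_i are represented by their
   matrix entries in the product computational basis. *)
From HB Require Import structures.
From mathcomp Require Import all_boot all_order all_algebra.
Set Implicit Arguments. Unset Strict Implicit. Unset Printing Implicit Defensive.
Import Order.TTheory GRing.Theory Num.Theory.
Local Open Scope ring_scope.

Section QES.
Variables (C : numClosedFieldType) (n : nat) (d : 'I_n -> nat).

(* basis index of K = H_1 (x) ... (x) H_n, with dim H_i = d i *)
Definition idx : finType := {dffun forall i : 'I_n, 'I_(d i)}.

(* operators on K: entries X (a, b) = <a| X |b> *)
Local Notation op := {ffun idx * idx -> C}.

(* basis index of (x)_{j in J} H_j *)
Definition idxJ (J : {set 'I_n}) : finType :=
  {dffun forall j : {i : 'I_n | i \in J}, 'I_(d (val j))}.

Definition resJ (J : {set 'I_n}) (a : idx) : idxJ J :=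
  [ffun j : {i : 'I_n | i \in J} => a (val j)].

(* X = Y (x) I_{complement of J} for some operator Y on (x)_{j in J} H_j *)
Definition acts_only_on (J : {set 'I_n}) (X : op) : Prop :=
  exists Y : idxJ J -> idxJ J -> C,
    forall a b : idx,
      X (a, b) = Y (resJ J a) (resJ J b) *
                 (if [forall i, (i \notin J) ==> (a i == b i)] then 1 else 0).

Definition observable (X : op) : Prop :=
  forall a b : idx, X (b, a) = (X (a, b))^*.

Definition is_state (m : nat) (r : 'M[C]_m) : Prop :=
  (forall s t, r t s = (r s t)^*) /\
  (forall v : 'I_m -> C, 0 <= \sum_(s < m) \sum_(t < m) (v s)^* * r s t * v t) /\
  \tr r = 1.

Variable rho : forall i : 'I_n, 'M[C]_(d i).

Definition agree_off (i : 'I_n) (a a' : idx) : bool :=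
  [forall k, (k != i) ==> (a k == a' k)].

(* E_i Y = Tr_i[(rho_i (x) I) Y] (x) I_{H_i}, written entrywise:
   (E_i Y)(a,b) = [a_i = b_i] sum_{s,t} rho_i(s,t) Y(a[i:=t], b[i:=s]) *)
Definition Ei (i : 'I_n) (Y : op) : op :=
  [ffun ab : idx * idx =>
     if ab.1 i == ab.2 i then
       \sum_(a' : idx | agree_off i ab.1 a')
        \sum_(b' : idx | agree_off i ab.2 b') rho i (b' i) (a' i) * Y (a', b')
     else 0].

Definition EI (I : {set 'I_n}) (Y : op) : op := foldr Ei Y (enum I).

Definition varrho (a b : idx) : C := \prod_(i < n) rho i (a i) (b i).

(* <Y, Z>_varrho = Tr[varrho Y^dagger Z] *)
Definition inner (Y Z : op) : C :=
  \sum_(a : idx) \sum_(b : idx) \sum_(c : idx) varrho a b * (Y (c, b))^* * Z (c, a).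

Definition ES_decomp (X : op) (F : {set 'I_n} -> op) : Prop :=
  (forall J, observable (F J)) /\
  X = \sum_(J : {set 'I_n}) F J /\
  (forall J, acts_only_on J (F J)) /\
  (forall (J : {set 'I_n}) j, j \in J -> Ei j (F J) = 0).

End QES.

Notation op C d := {ffun idx d * idx d -> C}.

From HB Require Import structures.
From mathcomp Require Import all_boot all_order all_algebra.
Set Implicit Arguments. Unset Strict Implicit. Unset Printing Implicit Defensive.
Import Order.TTheory GRing.Theory Num.Theory.
Local Open Scope ring_scope.

(* X^{=J} is the Moebius inversion of J |-> E_{~J} X over the subsets of J,
   X^{=J} = sum_{I <= J} (-1)^{|J \ I|} E_{~I} X, so the partial sums (3) are
   Moebius inversion itself.  The E_i are commuting idempotents and, as
   Tr rho_i = 1, their fixed points are exactly the operators acting trivially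
   on H_i.  Hence for i outside J every E_{~I} X with I <= J is fixed by E_i,
   and X^{=J} acts only on J; for j in J, E_j E_{~I} X only depends on I \ {j},
   so the terms of I and I + {j} cancel and E_j X^{=J} = 0.  Conversely, if
   X = sum_K F_K is any such decomposition, E_{~J} fixes F_K for K <= J and
   kills it otherwise, so F has the same partial sums and Moebius inversion
   gives uniqueness.  Finally E_j is the partial trace against rho_j, so
   <Y, Z> = <Y, E_j Z> whenever Y acts trivially on H_j; for j in J \ I this
   gives <X^{=I}, X^{=J}> = 0. *)

Section FoldrPerm.
Variables (T : eqType) (R : Type) (f : T -> R -> R) (z : R).
Hypothesis fC : forall x y r, f x (f y r) = f y (f x r).

Lemma foldr_rem (s : seq T) x : x \in s -> foldr f z s = f x (foldr f z (rem x s)).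
Proof.
elim: s => [//|y s IHs]; rewrite in_cons /=.
have [-> //|yx] := eqVneq y x.
by move=> /= xs; rewrite IHs // fC.
Qed.

Lemma foldr_perm (s1 s2 : seq T) : perm_eq s1 s2 -> foldr f z s1 = foldr f z s2.
Proof.
elim: s1 s2 => [|x s1 IHs] s2 eq12.
  by move: eq12; rewrite perm_sym => /perm_nilP->.
have s2x : x \in s2 by rewrite -(perm_mem eq12) mem_head.
rewrite (foldr_rem s2x) /= (IHs (rem x s2)) //.
by rewrite -(perm_cons x) (permPl eq12) perm_to_rem.
Qed.

End FoldrPerm.

Section SubsetMobius.
Variables (T : finType) (V : zmodType).
Implicit Types (I J K : {set T}) (f g : {set T} -> V).

Definition zeta f J : V := \sum_(I : {set T} | I \subset J) f I.

Definition mobius g J : V := \sum_(I : {set T} | I \subset J) g I *~ (-1) ^+ #|J :\: I|.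

Lemma sum_toggle_eq0 (W : zmodType) (P : pred {set T}) (h : {set T} -> W) j :
  (forall I, j \notin I -> P (j |: I) = P I) ->
  (forall I, j \notin I -> P I -> h (j |: I) = - h I) ->
  \sum_(I | P I) h I = 0.
Proof.
move=> Pj hj; rewrite (bigID (fun I => j \in I)) /=.
rewrite (reindex_onto (fun I => j |: I) (fun I => I :\ j)) /=; last first.
  by move=> I /andP[_ jI]; rewrite setD1K.
rewrite [X in X + _](eq_bigl (fun I => P I && (j \notin I))) -?big_split /=.
  by apply: big1 => I /andP[PI jI]; rewrite hj // addNr.
move=> I; rewrite setU11 andbT; have [jI|jI] := boolP (j \in I).
  by rewrite andbF; apply/negbTE/negP => /andP[_ /eqP eqI]; rewrite -eqI setD11 in jI.
by rewrite Pj // setU1K // eqxx andbT.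
Qed.

Lemma interval_setU1 K J I j : j \in J -> j \notin K -> j \notin I ->
  (K \subset j |: I) && (j |: I \subset J) = (K \subset I) && (I \subset J).
Proof.
move=> jJ jK jI; rewrite subUset sub1set jJ /=; congr andb.
apply/idP/idP => [/subsetP KjI|/subset_trans->//]; last exact: subsetU1.
apply/subsetP => k kK; have := KjI k kK; rewrite in_setU1.
by case/predU1P => [kj|//]; rewrite -kj kK in jK.
Qed.

Lemma sum_interval_eq0 (W : zmodType) (h : {set T} -> W) K J j :
  j \in J -> j \notin K -> (forall I, j \notin I -> h (j |: I) = - h I) ->
  \sum_(I : {set T} | (K \subset I) && (I \subset J)) h I = 0.
Proof.
move=> jJ jK hj; apply: (sum_toggle_eq0 (j := j)) => [I jI|I jI _]; last exact: hj.
exact: interval_setU1.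
Qed.

Lemma card_setU1D K I j : j \notin K -> j \notin I ->
  #|(j |: I) :\: K| = #|I :\: K|.+1.
Proof.
move=> jK jI; have -> : (j |: I) :\: K = j |: (I :\: K).
  by apply/setP => k; rewrite !inE; case: eqVneq => // ->; rewrite jK.
by rewrite cardsU1 in_setD (negbTE jI) andbF.
Qed.

Lemma card_setDU1 J I j : j \in J -> j \notin I ->
  #|J :\: I| = #|J :\: (j |: I)|.+1.
Proof.
move=> jJ jI; have -> : J :\: I = j |: (J :\: (j |: I)).
  by apply/setP => k; rewrite !inE; case: eqVneq => [->|]; rewrite ?jJ ?jI.
by rewrite cardsU1 !inE eqxx.
Qed.

Lemma sum_sign_interval_lo K J : K \subset J ->
  \sum_(I : {set T} | (K \subset I) && (I \subset J)) (-1) ^+ #|I :\: K| = (K == J)%:Z.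
Proof.
move=> KJ; have [<-|neKJ] := eqVneq K J.
  by rewrite (big_pred1 K) ?setDv ?cards0 // => I /=; rewrite eqEsubset andbC.
have /properP[_ [j jJ jK]] : K \proper J by rewrite properEneq neKJ.
by rewrite (sum_interval_eq0 jJ jK) // => I jI; rewrite card_setU1D // exprS mulN1r.
Qed.

Lemma sum_sign_interval_hi K J : K \subset J ->
  \sum_(I : {set T} | (K \subset I) && (I \subset J)) (-1) ^+ #|J :\: I| = (K == J)%:Z.
Proof.
move=> KJ; have [<-|neKJ] := eqVneq K J.
  by rewrite (big_pred1 K) ?setDv ?cards0 // => I /=; rewrite eqEsubset andbC.
have /properP[_ [j jJ jK]] : K \proper J by rewrite properEneq neKJ.
rewrite (sum_interval_eq0 jJ jK) // => I jI.
by rewrite [in RHS](card_setDU1 jJ jI) exprS mulN1r opprK.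
Qed.

Lemma sum_subset_exchange (F : {set T} -> {set T} -> V) J :
  \sum_(I : {set T} | I \subset J) \sum_(K : {set T} | K \subset I) F I K =
  \sum_(K : {set T} | K \subset J) \sum_(I : {set T} | (K \subset I) && (I \subset J)) F I K.
Proof.
rewrite (exchange_big_dep (fun K : {set T} => K \subset J)) /=; last first.
  by move=> I K IJ KI; exact: subset_trans KI IJ.
by apply: eq_bigr => K _; apply: eq_bigl => I; rewrite andbC.
Qed.

Lemma sum_subset_delta (c : {set T} -> int) f J :
  (forall K, K \subset J -> c K = (K == J)%:Z) ->
  \sum_(K : {set T} | K \subset J) f K *~ c K = f J.
Proof.
move=> cE; rewrite (bigD1 J) //= cE // eqxx big1 ?addr0 // => K /andP[KJ neKJ].
by rewrite cE // (negbTE neKJ).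
Qed.

Lemma zeta_mobius g J : zeta (mobius g) J = g J.
Proof.
rewrite /zeta /mobius sum_subset_exchange.
under eq_bigr do rewrite -mulrz_sumr.
by apply: sum_subset_delta => K; exact: sum_sign_interval_lo.
Qed.

Lemma mobius_zeta f J : mobius (zeta f) J = f J.
Proof.
rewrite /zeta /mobius; under eq_bigr do rewrite mulrz_suml.
rewrite sum_subset_exchange; under eq_bigr do rewrite -mulrz_sumr.
by apply: sum_subset_delta => K; exact: sum_sign_interval_hi.
Qed.

Lemma mobius_eq0 g J j : (forall I, g (j |: I) = g I) -> j \in J -> mobius g J = 0.
Proof.
move=> gj jJ; apply: (sum_toggle_eq0 (j := j)) => [I jI|I jI _].
  by rewrite subUset sub1set jJ.
by rewrite gj [in RHS](card_setDU1 jJ jI) exprS mulN1r mulrNz opprK.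
Qed.

Lemma mobiusD g1 g2 J : mobius (fun I => g1 I + g2 I) J = mobius g1 J + mobius g2 J.
Proof. by rewrite -big_split; apply: eq_bigr => I _; rewrite mulrzDl. Qed.

End SubsetMobius.

Lemma raddf_mobius (T : finType) (V W : zmodType) (f : {additive V -> W})
    (g : {set T} -> V) J :
  f (mobius g J) = mobius (f \o g) J.
Proof. by rewrite raddf_sum; apply: eq_bigr => I _; rewrite raddfMz. Qed.

Section Operators.
Variables (C : numClosedFieldType) (n : nat) (d : 'I_n -> nat).
Variable rho : forall i : 'I_n, 'M[C]_(d i).
Local Notation idx := (idx d).
Local Notation op := (op C d).
Local Notation Ei := (Ei rho).
Local Notation EI := (EI rho).
Implicit Types (a b c : idx) (X Y Z : op) (I J K L S : {set 'I_n}) (i j k : 'I_n).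

Definition upd a (j : 'I_n) (t : 'I_(d j)) : idx := [ffun k => dfwith a t k].
Arguments upd a j t : clear implicits.

Lemma upd_same a j t : upd a j t j = t.
Proof. by rewrite ffunE dfwith_in. Qed.

Lemma upd_other a j t i : i != j -> upd a j t i = a i.
Proof. by rewrite eq_sym => ji; rewrite ffunE dfwith_out. Qed.

Lemma updK a j s t : upd (upd a j s) j t = upd a j t.
Proof.
apply/ffunP => i; have [->|ij] := eqVneq i j; first by rewrite !upd_same.
by rewrite !upd_other.
Qed.

Lemma upd_id a j : upd a j (a j) = a.
Proof.
apply/ffunP => i; have [->|ij] := eqVneq i j; first by rewrite upd_same.
by rewrite upd_other.
Qed.

Lemma updC a i j s t : i != j -> upd (upd a i s) j t = upd (upd a j t) i s.
Proof.
move=> ij; apply/ffunP => k; have [->|kj] := eqVneq k j.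
  by rewrite upd_same upd_other 1?eq_sym // upd_same.
have [->|ki] := eqVneq k i; first by rewrite upd_other // !upd_same.
by rewrite !upd_other.
Qed.

Lemma agree_offE i a a' : agree_off i a a' = (a' == upd a i (a' i)).
Proof.
apply/forallP/eqP => [aa'|-> k]; last by apply/implyP => ki; rewrite upd_other.
apply/ffunP => k; have [->|ki] := eqVneq k i; first by rewrite upd_same.
by rewrite upd_other //; apply/esym/eqP; have /implyP := aa' k; apply.
Qed.

Lemma sum_agree_off (V : nmodType) i a (F : idx -> V) :
  \sum_(a' | agree_off i a a') F a' = \sum_(s : 'I_(d i)) F (upd a i s).
Proof.
rewrite (reindex_onto (upd a i) (fun a' : idx => a' i)) => [|a']; last first.
  by rewrite agree_offE eq_sym => /eqP.
by apply: eq_bigl => s; rewrite agree_offE !upd_same !eqxx.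
Qed.

Lemma sum_slices (V : nmodType) j (t0 : 'I_(d j)) (F : idx -> V) :
  \sum_(a : idx) F a = \sum_(a : idx | a j == t0) \sum_(t : 'I_(d j)) F (upd a j t).
Proof.
rewrite (partition_big (fun a => upd a j t0) (fun a : idx => a j == t0)); last first.
  by move=> a _; rewrite upd_same.
apply: eq_bigr => a /eqP aj.
rewrite (reindex_onto (upd a j) (fun a' : idx => a' j)) => [|a' /eqP <-]; last first.
  by rewrite updK upd_id.
by apply: eq_bigl => t; rewrite updK -aj upd_id upd_same !eqxx.
Qed.

Lemma EiE i Y a b :
  Ei i Y (a, b) = (a i == b i)%:R *
    \sum_(s : 'I_(d i)) \sum_(t : 'I_(d i)) rho i t s * Y (upd a i s, upd b i t).
Proof.
rewrite /Ei ffunE /=; case: eqP => _; rewrite ?mul0r // mul1r sum_agree_off.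
by apply: eq_bigr => s _; rewrite sum_agree_off; apply: eq_bigr => t _; rewrite !upd_same.
Qed.

Lemma Ei_is_zmod_morphism i : zmod_morphism (Ei i).
Proof.
move=> Y Z; apply/ffunP => -[a b].
rewrite EiE [RHS]ffunE EiE ffunE EiE -mulrBr -sumrB.
congr (_ * _); apply: eq_bigr => s _; rewrite -sumrB.
by apply: eq_bigr => t _; rewrite !ffunE mulrBr.
Qed.

HB.instance Definition _ i :=
  GRing.isZmodMorphism.Build op op (Ei i) (Ei_is_zmod_morphism i).

Lemma Ei_EiE i j Y a b : i != j ->
  Ei i (Ei j Y) (a, b) = (a i == b i)%:R * (a j == b j)%:R *
    \sum_(p : 'I_(d i) * 'I_(d i)) \sum_(q : 'I_(d j) * 'I_(d j))
      rho i p.2 p.1 * rho j q.2 q.1 * Y (upd (upd a i p.1) j q.1, upd (upd b i p.2) j q.2).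
Proof.
move=> ij; have ji : j != i by rewrite eq_sym.
rewrite EiE -mulrA; congr (_ * _).
under eq_bigr => s _ do under eq_bigr => t _ do rewrite EiE !upd_other // mulrCA.
under eq_bigr => s _ do rewrite -mulr_sumr.
rewrite -mulr_sumr pair_big /=; congr (_ * _); apply: eq_bigr => p _.
by rewrite pair_big mulr_sumr /=; apply: eq_bigr => q _; rewrite mulrA.
Qed.

Lemma Ei_comm i j Y : Ei i (Ei j Y) = Ei j (Ei i Y).
Proof.
have [->//|ij] := eqVneq i j; have ji : j != i by rewrite eq_sym.
apply/ffunP => -[a b]; rewrite Ei_EiE // Ei_EiE //; congr (_ * _); first exact: mulrC.
rewrite exchange_big; apply: eq_bigr => q _; apply: eq_bigr => p _.
by rewrite updC // [upd (upd b _ _) _ _]updC // [rho i _ _ * _]mulrC.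
Qed.

(* [Z] is of the form [I_{H_i} (x) Z']. *)
Definition trivial_at i Z :=
  forall a b s t u, Z (upd a i s, upd b i t) = (s == t)%:R * Z (upd a i u, upd b i u).

Lemma trivial_atE i Z u : trivial_at i Z ->
  forall a b, Z (a, b) = (a i == b i)%:R * Z (upd a i u, upd b i u).
Proof. by move=> Zi a b; rewrite -{1}(upd_id a i) -{1}(upd_id b i) (Zi _ _ _ _ u). Qed.

Lemma trivial_at_Ei i Y : trivial_at i (Ei i Y).
Proof.
move=> a b s t u; rewrite !EiE !upd_same eqxx mul1r; congr (_ * _).
by apply: eq_bigr => s' _; apply: eq_bigr => t' _; rewrite !updK.
Qed.

Definition agree_outside J a b := [forall k, (k \notin J) ==> (a k == b k)].

Lemma agree_outside_upd J a b i s t : i \notin J ->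
  agree_outside J (upd a i s) (upd b i t) = (s == t) && agree_outside (i |: J) a b.
Proof.
move=> iJ; apply/forallP/andP => [ab|[st /forallP ab] k].
  split; first by have /implyP := ab i; rewrite !upd_same; apply.
  apply/forallP => k; rewrite !inE negb_or; apply/implyP => /andP[ki kJ].
  by have /implyP := ab k; rewrite !upd_other //; apply.
apply/implyP => kJ; have [->|ki] := eqVneq k i; first by rewrite !upd_same.
by rewrite !upd_other //; have /implyP := ab k; rewrite !inE negb_or ki; apply.
Qed.

Lemma resJ_upd J a i s : i \notin J -> resJ J (upd a i s) = resJ J a.
Proof.
move=> iJ; apply/ffunP => k; rewrite !ffunE dfwith_out //.
by apply: contraNneq iJ => ->; exact: valP.
Qed.

Lemma acts_only_on_trivial_at J Z i : acts_only_on J Z -> i \notin J -> trivial_at i Z.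
Proof.
move=> [Y ZY] iJ a b s t u; rewrite !ZY !resJ_upd //.
rewrite -/(agree_outside J (upd a i s) (upd b i t)) -/(agree_outside J (upd a i u) (upd b i u)).
rewrite !agree_outside_upd // eqxx.
by case: (s == t); rewrite ?mul1r ?mul0r ?mulr0.
Qed.

Definition merge (s : seq 'I_n) (a0 a : idx) : idx := [ffun i => if i \in s then a0 i else a i].

Lemma trivial_at_merge Z (s : seq 'I_n) a0 :
  uniq s -> (forall i, i \in s -> trivial_at i Z) -> forall a b,
  Z (a, b) = (all (fun i => a i == b i) s)%:R * Z (merge s a0 a, merge s a0 b).
Proof.
elim: s => [_ _ a b|i s IHs /= /andP[iS us] Zs a b].
  have merge0 c : merge [::] a0 c = c by apply/ffunP => k; rewrite ffunE.
  by rewrite !merge0 mul1r.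
rewrite IHs // => [|k ks]; last by apply: Zs; rewrite in_cons ks orbT.
rewrite (trivial_atE (a0 i) (Zs i (mem_head i s))) !ffunE (negbTE iS) mulrA -natrM.
have mergeE c : upd (merge s a0 c) i (a0 i) = merge (i :: s) a0 c.
  apply/ffunP => k; rewrite [RHS]ffunE in_cons.
  by have [->|ki] := eqVneq k i; [rewrite upd_same | rewrite upd_other // ffunE].
by rewrite !mergeE mulnb andbC.
Qed.

Definition ext J (a0 : idx) (al : idxJ d J) : idx :=
  [ffun i => match (i \in J) =P true with
             | ReflectT iJ => al (exist _ i iJ)
             | ReflectF _ => a0 i end].

Lemma ext_resJ J a0 a : ext a0 (resJ J a) = merge (enum (~: J)) a0 a.
Proof.
apply/ffunP => i; rewrite !ffunE mem_enum inE.
by case: eqP => [iJ|/negP/negbTE iJ]; rewrite iJ // ffunE.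
Qed.

Lemma trivial_at_acts_only_on J Z :
  (forall i, i \notin J -> trivial_at i Z) -> acts_only_on J Z.
Proof.
move=> ZJ; have [a0 _|idx0] := pickP (@predT idx); last first.
  by exists (fun _ _ => 0) => a; have := idx0 a.
exists (fun al be => Z (ext a0 al, ext a0 be)) => a b; rewrite !ext_resJ mulrC.
have Zout i : i \in enum (~: J) -> trivial_at i Z by rewrite mem_enum inE; exact: ZJ.
rewrite (trivial_at_merge a0 (enum_uniq _) Zout).
have -> : all (fun i => a i == b i) (enum (~: J)) = agree_outside J a b.
  apply/allP/forallP => ab i; last by rewrite mem_enum inE => iJ; exact: (implyP (ab i)).
  by apply/implyP => iJ; apply: ab; rewrite mem_enum inE.
by rewrite /agree_outside; case: ifP.
Qed.

Lemma acts_only_onP J Z : acts_only_on J Z <-> forall i, i \notin J -> trivial_at i Z.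
Proof.
split=> [ZJ i|]; [exact: acts_only_on_trivial_at | exact: trivial_at_acts_only_on].
Qed.

Lemma EI_is_zmod_morphism S : zmod_morphism (EI S).
Proof. by move=> Y Z; rewrite /EI; elim: (enum S) => //= i s ->; rewrite raddfB. Qed.

HB.instance Definition _ S :=
  GRing.isZmodMorphism.Build op op (EI S) (EI_is_zmod_morphism S).

Lemma EI_comm (f : op -> op) S Y :
  (forall i Y, f (Ei i Y) = Ei i (f Y)) -> f (EI S Y) = EI S (f Y).
Proof. by move=> fE; rewrite /EI; elim: (enum S) => //= i s <-; exact: fE. Qed.

Lemma EI_set0 Y : EI set0 Y = Y.
Proof. by rewrite /EI enum_set0. Qed.

Definition ES_comp J X : op := mobius (fun I => EI (~: I) X) J.

Lemma zeta_ES_comp X J : zeta (ES_comp ^~ X) J = EI (~: J) X.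
Proof. exact: zeta_mobius. Qed.

Lemma ES_compD J X Y : ES_comp J (X + Y) = ES_comp J X + ES_comp J Y.
Proof. by rewrite -mobiusD; apply: eq_bigr => I _; rewrite raddfD. Qed.

Lemma ES_comp_comm (f : {additive op -> op}) J X :
  (forall i Y, f (Ei i Y) = Ei i (f Y)) -> f (ES_comp J X) = ES_comp J (f X).
Proof. by move=> fE; rewrite raddf_mobius; apply: eq_bigr => I _ /=; rewrite EI_comm. Qed.

Definition scale (r : C) Y : op := [ffun ab => r * Y ab].

Lemma scale_is_zmod_morphism r : zmod_morphism (scale r).
Proof. by move=> Y Z; apply/ffunP => ab; rewrite !ffunE mulrBr. Qed.

HB.instance Definition _ r :=
  GRing.isZmodMorphism.Build op op (scale r) (scale_is_zmod_morphism r).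

Lemma scale_Ei r i Y : scale r (Ei i Y) = Ei i (scale r Y).
Proof.
apply/ffunP => -[a b]; rewrite ffunE !EiE mulrCA mulr_sumr; congr (_ * _).
apply: eq_bigr => s _; rewrite mulr_sumr; apply: eq_bigr => t _.
by rewrite ffunE mulrCA.
Qed.

Lemma ES_comp_linear J (r : C) X Y :
  ES_comp J [ffun ab => r * X ab + Y ab] = [ffun ab => r * ES_comp J X ab + ES_comp J Y ab].
Proof.
have lin (Z W : op) : [ffun ab => r * Z ab + W ab] = scale r Z + W.
  by apply/ffunP => ab; rewrite !ffunE.
by rewrite !lin ES_compD -ES_comp_comm // => i Z; exact: scale_Ei.
Qed.

Definition adjoint Y : op := [ffun ab => (Y (ab.2, ab.1))^*].

Lemma observableE Y : observable Y <-> adjoint Y = Y.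
Proof.
split=> [YE|YE a b]; first by apply/ffunP => -[a b]; rewrite ffunE /= YE conjCK.
by rewrite -{1}YE ffunE.
Qed.

Lemma adjoint_is_zmod_morphism : zmod_morphism adjoint.
Proof. by move=> Y Z; apply/ffunP => ab; rewrite !ffunE rmorphB. Qed.

HB.instance Definition _ :=
  GRing.isZmodMorphism.Build op op adjoint adjoint_is_zmod_morphism.

Definition varrho_off j a b := \prod_(i | i != j) rho i (a i) (b i).

Lemma varrho_split j a b : varrho rho a b = rho j (a j) (b j) * varrho_off j a b.
Proof. by rewrite /varrho (bigD1 j). Qed.

Lemma varrho_off_updl j a b u : varrho_off j (upd a j u) b = varrho_off j a b.
Proof. by apply: eq_bigr => i ij; rewrite upd_other. Qed.

Lemma varrho_off_updr j a b v : varrho_off j a (upd b j v) = varrho_off j a b.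
Proof. by apply: eq_bigr => i ij; rewrite upd_other. Qed.

Lemma sum_trace_slices j (t0 : 'I_(d j)) (M : idx -> idx -> C) W :
  (forall a c u v, M (upd a j u) (upd c j v) = M a c) ->
  \sum_(a : idx) \sum_(c : idx) rho j (a j) (c j) * M a c * W (c, a) =
  \sum_(a : idx | a j == t0) \sum_(c : idx | c j == t0) M a c *
    \sum_(u : 'I_(d j)) \sum_(v : 'I_(d j)) rho j u v * W (upd c j v, upd a j u).
Proof.
move=> MI; rewrite (sum_slices t0); apply: eq_bigr => a _.
under eq_bigr => u _ do rewrite (sum_slices t0).
rewrite exchange_big; apply: eq_bigr => c _; rewrite mulr_sumr; apply: eq_bigr => u _.
rewrite mulr_sumr; apply: eq_bigr => v _.
by rewrite !upd_same MI -mulrA mulrCA.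
Qed.

Lemma innerE Y W : inner rho Y W =
  \sum_(a : idx) \sum_(c : idx) (\sum_(b : idx) varrho rho a b * (Y (c, b))^*) * W (c, a).
Proof.
apply: eq_bigr => a _; rewrite exchange_big; apply: eq_bigr => c _.
by rewrite mulr_suml.
Qed.

Section States.
Hypothesis rho_herm : forall i s t, rho i t s = (rho i s t)^*.
Hypothesis rho_tr1 : forall i, \tr (rho i) = 1.

Lemma Ei_id i Z : trivial_at i Z -> Ei i Z = Z.
Proof.
move=> Zi; apply/ffunP => -[a b]; rewrite EiE (trivial_atE (a i) Zi) upd_id; congr (_ * _).
rewrite -[RHS]mul1r -(rho_tr1 i) mulr_suml; apply: eq_bigr => s _.
under eq_bigr => t _ do rewrite (Zi a b s t (a i)) upd_id.
rewrite (bigD1 s) //= eqxx mul1r big1 ?addr0 // => t ts.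
by rewrite eq_sym (negbTE ts) mul0r mulr0.
Qed.

Lemma Ei_fixedP i Z : Ei i Z = Z <-> trivial_at i Z.
Proof. by split=> [<-|]; [exact: trivial_at_Ei | exact: Ei_id]. Qed.

Lemma Ei_idem i Y : Ei i (Ei i Y) = Ei i Y.
Proof. exact/Ei_id/trivial_at_Ei. Qed.

Lemma Ei_EI i S Y : i \in S -> Ei i (EI S Y) = EI S Y.
Proof.
rewrite /EI -mem_enum; elim: (enum S) => //= j s IHs.
by rewrite in_cons; have [<- _|ij /= iS] := eqVneq i j; [exact: Ei_idem | rewrite Ei_comm IHs].
Qed.

Lemma EI_setU1 k S Y : EI (k |: S) Y = Ei k (EI S Y).
Proof.
have [kS|kS] := boolP (k \in S).
  by rewrite Ei_EI //; congr EI; apply/setUidPr; rewrite sub1set.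
rewrite /EI -[Ei k _]/(foldr Ei Y (k :: enum S)); apply: foldr_perm => [i j W|].
  exact: Ei_comm.
apply: uniq_perm; rewrite ?enum_uniq /= ?mem_enum ?kS ?enum_uniq // => i.
by rewrite mem_enum in_cons mem_enum in_setU1.
Qed.

Lemma EI_id S Y : (forall i, i \in S -> Ei i Y = Y) -> EI S Y = Y.
Proof.
move=> YS; have : forall i, i \in enum S -> Ei i Y = Y.
  by move=> i; rewrite mem_enum; exact: YS.
rewrite /EI; elim: (enum S) => //= j s IHs Ys.
by rewrite IHs ?Ys ?mem_head // => i iS; apply: Ys; rewrite in_cons iS orbT.
Qed.

Lemma EI_eq0 k S Y : k \in S -> Ei k Y = 0 -> EI S Y = 0.
Proof.
move=> kS Yk; have <- : k |: S = S by apply/setUidPr; rewrite sub1set.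
rewrite EI_setU1 (EI_comm (f := Ei k)) ?Yk ?raddf0 //.
exact: Ei_comm.
Qed.

Lemma sum_ES_comp X : \sum_(J : {set 'I_n}) ES_comp J X = X.
Proof.
rewrite -[RHS](EI_set0 X) -setCT -zeta_ES_comp.
by apply: eq_bigl => J; rewrite subsetT.
Qed.

Lemma Ei_ES_comp_out i J X : i \notin J -> Ei i (ES_comp J X) = ES_comp J X.
Proof.
move=> iJ; rewrite raddf_mobius; apply: eq_bigr => I IJ /=; rewrite Ei_EI // inE.
by apply: contra iJ; exact: subsetP.
Qed.

Lemma Ei_ES_comp_in j J X : j \in J -> Ei j (ES_comp J X) = 0.
Proof.
move=> jJ; rewrite raddf_mobius; apply: mobius_eq0 jJ => I /=; rewrite -!EI_setU1.
by congr EI; apply/setP => k; rewrite !inE; case: eqVneq.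
Qed.

Lemma ES_decomp_uniq X F : ES_decomp rho X F -> forall J, F J = ES_comp J X.
Proof.
move=> [_ [XF [FJ FE]]] J.
have zetaF K : zeta F K = EI (~: K) X.
  rewrite XF raddf_sum (bigID (fun I => I \subset K)) /= [X in _ + X]big1 ?addr0.
    apply: eq_bigr => I IK; symmetry; apply: EI_id => i; rewrite inE => iK.
    by apply/Ei_fixedP/(acts_only_onP _ _).1 => //; apply: contra iK; exact: subsetP.
  by move=> I /subsetPn[k kI kK]; apply: (EI_eq0 (k := k)); rewrite ?inE ?FE.
by rewrite -[LHS]mobius_zeta; apply: eq_bigr => I _; rewrite zetaF.
Qed.

Lemma adjoint_Ei i Y : adjoint (Ei i Y) = Ei i (adjoint Y).
Proof.
apply/ffunP => -[a b]; rewrite ffunE !EiE /= rmorphM rmorph_nat eq_sym; congr (_ * _).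
rewrite rmorph_sum exchange_big; apply: eq_bigr => t _.
rewrite rmorph_sum; apply: eq_bigr => s _.
by rewrite rmorphM ffunE [rho i t s]rho_herm.
Qed.

Lemma observable_ES_comp J X : observable X -> observable (ES_comp J X).
Proof.
move/observableE => XE; apply/observableE.
by rewrite ES_comp_comm /= ?XE // => i Y; exact: adjoint_Ei.
Qed.

Lemma ES_decomp_ES_comp X : observable X -> ES_decomp rho X (ES_comp ^~ X).
Proof.
move=> obsX; split; first by move=> J; exact: observable_ES_comp.
split; first by rewrite sum_ES_comp.
split; last by move=> J j; exact: Ei_ES_comp_in.
by move=> J; apply/acts_only_onP => i iJ; exact/Ei_fixedP/Ei_ES_comp_out.
Qed.

Lemma sum_rho_Ei j Z a c :
  \sum_(u : 'I_(d j)) \sum_(v : 'I_(d j)) rho j u v * Ei j Z (upd c j v, upd a j u) =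
  \sum_(u : 'I_(d j)) \sum_(v : 'I_(d j)) rho j u v * Z (upd c j v, upd a j u).
Proof.
under eq_bigr => u _ do under eq_bigr => v _ do rewrite EiE !upd_same.
transitivity (\sum_(u : 'I_(d j)) rho j u u *
    \sum_(s : 'I_(d j)) \sum_(t : 'I_(d j)) rho j t s * Z (upd c j s, upd a j t)).
  apply: eq_bigr => u _; rewrite (bigD1 u) //= [X in _ + X]big1 => [|v vu]; last first.
    by rewrite (negbTE vu) mul0r mulr0.
  rewrite eqxx mul1r addr0; congr (_ * _).
  by apply: eq_bigr => s _; apply: eq_bigr => t _; rewrite !updK.
rewrite -mulr_suml -[\sum_(u < _) rho j u u]/(\tr (rho j)) rho_tr1 mul1r exchange_big.
by apply: eq_bigr => u _; apply: eq_bigr => v _.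
Qed.

Lemma trace_Ei j (M : idx -> idx -> C) Z :
  (forall a c u v, M (upd a j u) (upd c j v) = M a c) ->
  \sum_(a : idx) \sum_(c : idx) rho j (a j) (c j) * M a c * Ei j Z (c, a) =
  \sum_(a : idx) \sum_(c : idx) rho j (a j) (c j) * M a c * Z (c, a).
Proof.
move=> MI; have [a0 _|idx0] := pickP (@predT idx); last by rewrite !big_pred0.
rewrite !(sum_trace_slices (a0 j)) //; apply: eq_bigr => a _; apply: eq_bigr => c _.
by rewrite sum_rho_Ei.
Qed.

Lemma inner_Ei j Y Z : trivial_at j Y -> inner rho Y (Ei j Z) = inner rho Y Z.
Proof.
move=> Yj; have [a0 _|idx0] := pickP (@predT idx); last by rewrite /inner !big_pred0.
pose M a c := \sum_(b : idx | b j == a0 j) varrho_off j a b * (Y (upd c j (a0 j), b))^*.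
have MI a c u v : M (upd a j u) (upd c j v) = M a c.
  by apply: eq_bigr => b _; rewrite varrho_off_updl updK.
(* Since Y acts trivially on H_j, the j-th tensor factor of rho Y^dagger is rho_j. *)
have ME a c : \sum_(b : idx) varrho rho a b * (Y (c, b))^* = rho j (a j) (c j) * M a c.
  rewrite (sum_slices (a0 j)) mulr_sumr; apply: eq_bigr => b /eqP bj.
  have Yb w : Y (c, upd b j w) = (c j == w)%:R * Y (upd c j (a0 j), b).
    by rewrite (trivial_atE (a0 j) Yj) upd_same updK -bj upd_id.
  rewrite (bigD1 (c j)) //= big1 ?addr0 => [|w wc]; last first.
    by rewrite Yb eq_sym (negbTE wc) mul0r rmorph0 mulr0.
  by rewrite Yb eqxx mul1r (varrho_split j) upd_same varrho_off_updr mulrA.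
rewrite !innerE; under eq_bigr => a _ do under eq_bigr => c _ do rewrite ME.
under [RHS]eq_bigr => a _ do under eq_bigr => c _ do rewrite ME.
exact: trace_Ei.
Qed.

Lemma inner_eq0 j Y Z : trivial_at j Y -> Ei j Z = 0 -> inner rho Y Z = 0.
Proof.
move=> Yj Zj; rewrite -(inner_Ei Z Yj) Zj; apply: big1 => a _; apply: big1 => b _.
by apply: big1 => c _; rewrite ffunE mulr0.
Qed.

Lemma inner_conj Y Z : inner rho Y Z = (inner rho Z Y)^*.
Proof.
rewrite /inner rmorph_sum exchange_big; apply: eq_bigr => b _.
rewrite rmorph_sum; apply: eq_bigr => a _; rewrite rmorph_sum; apply: eq_bigr => c _.
rewrite !rmorphM /= conjCK mulrAC; congr (_ * _ * _); rewrite rmorph_prod.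
by apply: eq_bigr => i _; exact: rho_herm.
Qed.

Lemma inner_ES_comp I J X : I != J -> inner rho (ES_comp I X) (ES_comp J X) = 0.
Proof.
have orth K L : ~~ (L \subset K) -> inner rho (ES_comp K X) (ES_comp L X) = 0.
  move=> /subsetPn[j jL jK]; apply: (inner_eq0 (j := j)); last exact: Ei_ES_comp_in.
  exact/Ei_fixedP/Ei_ES_comp_out.
move=> neIJ; have [JI|] := boolP (J \subset I); last exact: orth.
rewrite inner_conj orth ?rmorph0 //; apply: contra neIJ => IJ.
by rewrite eqEsubset IJ.
Qed.

End States.

End Operators.

Theorem theorem6p9 (C : numClosedFieldType) (n : nat) (d : 'I_n -> nat)
    (rho : forall i : 'I_n, 'M[C]_(d i))
    (Hrho : forall i, is_state (rho i)) :
  exists Dec : {set 'I_n} -> op C d -> op C d,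
    (* existence *)
    (forall X, observable X -> ES_decomp rho X (fun J => Dec J X)) /\
    (* uniqueness *)
    (forall X F, observable X -> ES_decomp rho X F -> forall J, F J = Dec J X) /\
    (* (3) linearity (over the reals, on observables) *)
    (forall J (r : C) (X Y : op C d), r \is Num.real -> observable X -> observable Y ->
       Dec J [ffun ab => r * X ab + Y ab] =
         [ffun ab => r * Dec J X ab + Dec J Y ab]) /\
    (* (3) partial sums *)
    (forall (J : {set 'I_n}) X, observable X ->
       \sum_(I : {set 'I_n} | I \subset J) Dec I X = EI rho (~: J) X) /\
    (* (4) orthogonality *)
    (forall (I J : {set 'I_n}) X, observable X -> I != J -> inner rho (Dec I X) (Dec J X) = 0).
Proof.
have rho_herm i : forall s t, rho i t s = (rho i s t)^* by have [] := Hrho i.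
have rho_tr1 i : \tr (rho i) = 1 by have [_ []] := Hrho i.
exists (ES_comp rho); split.
  by move=> X obsX; exact: (ES_decomp_ES_comp rho_herm rho_tr1 obsX).
split; first by move=> X F _ decF; exact: (ES_decomp_uniq rho_tr1 decF).
split; first by move=> J r X Y _ _ _; exact: ES_comp_linear.
split; first by move=> J X _; exact: zeta_ES_comp.
by move=> I J X _ neIJ; exact: (inner_ES_comp rho_herm rho_tr1 X neIJ).
Qed.
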